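(* Let $X$ be a real Banach space and $h:X\times X^*\to\mathbb{R}\cup\{\pm\infty\}$ a proper lower semicontinuous convex function. Then $D(\mathcal{J}\delta_{D(h)})\subseteq 0^+D(\mathcal{J}h)$.
   Context: $X$ is identified with its canonical image in $X^{**}$. $D(f)=\{z\;|\;f(z)<\infty\}$; $\delta_C$ is the indicator function of $C$ (0 on $C$, $+\infty$ elsewhere). For $g:X\times X^*\to\mathbb{R}\cup\{\pm\infty\}$, the conjugate is $g^*:X^*\times X^{**}\to\mathbb{R}\cup\{\pm\infty\}$, $g^*(x^*,x^{**})=\sup_{(y,y^* )\in X\times X^*}\langle y,x^*\rangle+\langle x^{**},y^*\rangle-g(y,y^* )$, and $(\mathcal{J}g)(x,x^* )=g^*(x^*,x)$. The recession cone of a set $C$ in a vector space is $0^+C=\{u\;|\;x+\lambda u\in C\ \forall x\in C,\ \forall\lambda\geq0\}$. *)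

From HB Require Import structures.
From mathcomp Require Import all_boot all_order all_algebra.
From mathcomp Require Import all_classical all_reals all_analysis.
Set Implicit Arguments. Unset Strict Implicit. Unset Printing Implicit Defensive.
Import Order.TTheory GRing.Theory Num.Theory.
Import numFieldNormedType.Exports.
Local Open Scope classical_set_scope.
Local Open Scope ring_scope.

(* The topological dual X^*
   is represented as the set of continuous linear functionals on X, inside
   the type X -> R.
   The pairing <y, x'> is x' y, and the pairing <x, y'> between the
   canonical image of x in X^** and y' in X^* is y' x. *)

Section Defs.
Variables (R : realType) (X : completeNormedModType R).

Definition dual : set (X -> R) :=
  [set f | (forall (a : R) (x y : X), f (a *: x + y) = a * f x + f y)
           /\ continuous f].

Definition XXs : set (X * (X -> R)) := [set p | dual p.2].

Definition dual_norm (f : X -> R) : R :=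
  sup [set `|f x| | x in [set x : X | `|x| <= 1]].

Definition dom (f : X * (X -> R) -> \bar R) : set (X * (X -> R)) :=
  [set z | XXs z /\ (f z < +oo)%E].

Definition indicator (C : set (X * (X -> R))) (z : X * (X -> R)) : \bar R :=
  if `[< C z >] then 0%E else +oo%E.

(* (J g)(x, x') = g^*(x', x)
   = sup_{(y,y') in X x X^*} <y, x'> + <x, y'> - g(y, y') *)
Definition Jconj (g : X * (X -> R) -> \bar R) (z : X * (X -> R)) : \bar R :=
  ereal_sup [set ((z.2 y + y' z.1)%:E - g (y, y'))%E
            | y in [set: X] & y' in dual].

Definition proper_fun (h : X * (X -> R) -> \bar R) : Prop :=
  (forall z, XXs z -> h z != -oo%E) /\ exists z, XXs z /\ (h z < +oo)%E.

Definition convex_fun (h : X * (X -> R) -> \bar R) : Prop :=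
  forall (p q : X * (X -> R)) (t a b : R), XXs p -> XXs q ->
    0 <= t <= 1 -> (h p <= a%:E)%E -> (h q <= b%:E)%E ->
    (h ((t *: p.1 + (1 - t) *: q.1)%R,
        fun y => (t * p.2 y + (1 - t) * q.2 y)%R)
      <= (t * a + (1 - t) * b)%R%:E)%E.

(* lower semicontinuity for the product of the norm topologies of X and
   of X^* (dual norm) *)
Definition lsc_fun (h : X * (X -> R) -> \bar R) : Prop :=
  forall (p : X * (X -> R)) (a : R), XXs p -> (a%:E < h p)%E ->
    exists2 e : R, 0 < e & forall q : X * (X -> R), XXs q ->
      (`|q.1 - p.1| < e)%R -> (dual_norm (fun y => q.2 y - p.2 y) < e)%R ->
      (a%:E < h q)%E.

Definition rec_cone (C : set (X * (X -> R))) : set (X * (X -> R)) :=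
  [set u | XXs u /\ forall x, C x -> forall l : R, 0 <= l ->
     C (x.1 + l *: u.1, fun y => x.2 y + l * u.2 y)].

End Defs.

From HB Require Import structures.
From mathcomp Require Import all_boot all_order all_algebra.
From mathcomp Require Import all_classical all_reals all_analysis.
From mathcomp Require Import ring.
Set Implicit Arguments. Unset Strict Implicit. Unset Printing Implicit Defensive.
Import Order.TTheory GRing.Theory Num.Theory.
Import numFieldNormedType.Exports.
Local Open Scope classical_set_scope.
Local Open Scope ring_scope.

(* For [u] in [D(J delta_(D h))] the functional [(y, y') |-> <y, u.2> + <u.1, y'>]
   is bounded above by [S := J delta_(D h) u] on [D(h)].  Since the pairing
   defining [J] is linear in the point, every term of the supremum defining
   [J h (x + l u)] is at most the corresponding term of [J h x] plus [l S];
   hence [J h (x + l u) <= J h x + l S < +oo]. *)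

Lemma lty_EFin_ub {R : realType} {e : \bar R} :
  (e < +oo)%E -> exists M : R, (e <= M%:E)%E.
Proof.
case: e => [r| |] //= _; first by exists r.
by exists 0; rewrite leNye.
Qed.

Section JconjShift.
Variables (R : realType) (X : completeNormedModType R).
Implicit Types (g : X * (X -> R) -> \bar R) (z : X * (X -> R)).

Lemma dualDZ (f g : X -> R) (l : R) :
  dual f -> dual g -> dual (fun y => f y + l * g y).
Proof.
move=> [lf cf] [lg cg]; split.
  by move=> a x y; rewrite lf lg; ring.
move=> z; apply: (@continuousD _ _ _ f (fun y => l * g y) z (cf z)).
by apply: continuousM; [exact: cvg_cst | exact: cg].
Qed.

Lemma Jconj_ge {g z} {y : X} {y' : X -> R} : dual y' ->
  ((z.2 y + y' z.1)%:E - g (y, y') <= Jconj g z)%E.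
Proof. by move=> Dy'; apply: ereal_sup_ubound; exists y => //; exists y'. Qed.

Lemma Jconj_indicator_dom_ge {h z} {y : X} {y' : X -> R} :
  dual y' -> (h (y, y') < +oo)%E ->
  ((z.2 y + y' z.1)%:E <= Jconj (indicator (dom h)) z)%E.
Proof.
move=> Dy' hy; apply: le_trans (Jconj_ge Dy').
by rewrite /indicator asboolT ?sube0.
Qed.

Variable h : X * (X -> R) -> \bar R.
Hypothesis h_neqNy : forall z, XXs z -> h z != -oo%E.

Lemma Jconj_shift_le x u (l M S : R) : 0 <= l ->
  (Jconj h x <= M%:E)%E -> (Jconj (indicator (dom h)) u <= S%:E)%E ->
  (Jconj h ((x.1 + l *: u.1)%R, fun y => (x.2 y + l * u.2 y)%R) <= (M + l * S)%:E)%E.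
Proof.
move=> l0 Jx Ju; apply: ge_ereal_sup => _ [y _ [y' Dy' <-]] /=.
have := @h_neqNy (y, y') Dy'.
case Eh: (h (y, y')) => [r| |] _ //; last by rewrite addeNy leNye.
have Hx : (x.2 y + y' x.1 - r <= M)%R.
  rewrite -lee_fin EFinB -Eh; exact: le_trans (Jconj_ge Dy') Jx.
have Hu : (u.2 y + y' u.1 <= S)%R.
  rewrite -lee_fin; apply: le_trans Ju; apply: (Jconj_indicator_dom_ge Dy').
  by rewrite Eh ltry.
have lin : y' (x.1 + l *: u.1) = y' x.1 + l * y' u.1.
  by case: Dy' => ly' _; rewrite addrC ly' addrC.
rewrite -EFinB lee_fin lin.
have -> : x.2 y + l * u.2 y + (y' x.1 + l * y' u.1) - r
          = (x.2 y + y' x.1 - r) + l * (u.2 y + y' u.1) by ring.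
exact: lerD Hx (ler_wpM2l l0 Hu).
Qed.

End JconjShift.

Theorem proposition3p1 (R : realType) (X : completeNormedModType R)
    (h : X * (X -> R) -> \bar R) :
  proper_fun h -> convex_fun h -> lsc_fun h ->
  dom (Jconj (indicator (dom h))) `<=` rec_cone (dom (Jconj h)).
Proof.
move=> [h_neqNy _] _ _ u [Xu Ju]; split => // x [Xx Jx] l l0.
have [S JuS] := lty_EFin_ub Ju.
have [M JxM] := lty_EFin_ub Jx.
split; first exact: dualDZ.
have Jxu := Jconj_shift_le h_neqNy l0 JxM JuS.
exact: le_lt_trans Jxu (ltry _).
Qed.
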